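(* Let $\mathcal{N}\in\mathbb{C}^{n\times n}$ be Hermitian positive definite. Then the projection $\Pi(P_\sharp,R_\sharp)=P_\sharp(R_\sharp^*AP_\sharp)^{-1}R_\sharp^*A$ is $\mathcal{N}$-orthogonal if and only if $\mathcal{N}$ can be written in the form $\mathcal{N}=V_r^{-*}\widetilde{\mathcal{D}}^*\widetilde{\mathcal{D}}V_r^{-1}$ for some invertible block-diagonal matrix $$\widetilde{\mathcal{D}}=\begin{bmatrix}\mathcal{U}_{cc}&0\\0&\mathcal{U}_{ff}\end{bmatrix},$$ where $\mathcal{U}_{cc}\in\mathbb{C}^{n_c\times n_c}$ and $\mathcal{U}_{ff}\in\mathbb{C}^{n_f\times n_f}$ are upper triangular.
   Context: Let $A,M\in\mathbb{C}^{n\times n}$ be nonsingular with $M^{-1}A$ and $M^{-*}A^*$ diagonalizable. Let $V_r=[\bm v_{r,1},\dots,\bm v_{r,n}]$ and $V_l=[\bm v_{l,1},\dots,\bm v_{l,n}]$ be invertible matrices of right and left generalized eigenvectors of the pencil $(A,M)$, i.e. $AV_r=MV_r\Lambda$ and $V_l^*A=\Lambda V_l^*M$ with $\Lambda=\mathrm{diag}(\lambda_1,\dots,\lambda_n)$, chosen so that $V_l^*AV_r=D_a$ and $V_l^*MV_r=D_m$ are diagonal, and with the eigenvalues ordered so that $|1-\lambda_1|\ge|1-\lambda_2|\ge\cdots\ge|1-\lambda_n|\ge0$. Fix $n_c\in\{1,\dots,n\}$ and $n_f=n-n_c$. $P_\sharp,R_\sharp\in\mathbb{C}^{n\times n_c}$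 are any matrices with $\mathrm{range}(P_\sharp)=\mathrm{span}\{\bm v_{r,1},\dots,\bm v_{r,n_c}\}$ and $\mathrm{range}(R_\sharp)=\mathrm{span}\{\bm v_{l,1},\dots,\bm v_{l,n_c}\}$ (then $R_\sharp^*AP_\sharp$ is invertible). For Hermitian positive definite $\mathcal{N}$, $\langle x,y\rangle_{\mathcal N}=y^*\mathcal N x$; a matrix $Z$ is $\mathcal N$-orthogonal if $\langle Zx,y\rangle_{\mathcal N}=\langle x,Zy\rangle_{\mathcal N}$ for all $x,y\in\mathbb{C}^n$. *)

From HB Require Import structures.
From mathcomp Require Import all_boot all_order all_algebra.
From mathcomp Require Export complex.
From mathcomp Require Import reals.
Set Implicit Arguments. Unset Strict Implicit. Unset Printing Implicit Defensive.
Import Order.TTheory GRing.Theory Num.Theory.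
Local Open Scope ring_scope.

Definition ctr {C : numClosedFieldType} {m n : nat} (A : 'M[C]_(m, n)) : 'M[C]_(n, m) :=
  (map_mx Num.conj A)^T.

Definition hpd {C : numClosedFieldType} {n : nat} (N : 'M[C]_n) : Prop :=
  ctr N = N /\ forall x : 'cV[C]_n, x != 0 -> 0 < (ctr x *m N *m x) 0 0.

Definition ipN {C : numClosedFieldType} {n : nat} (N : 'M[C]_n) (x y : 'cV[C]_n) : C :=
  (ctr y *m N *m x) 0 0.

Definition N_orthogonal {C : numClosedFieldType} {n : nat} (N Z : 'M[C]_n) : Prop :=
  forall x y : 'cV[C]_n, ipN N (Z *m x) y = ipN N x (Z *m y).

Definition upper_triangular {C : numClosedFieldType} {n : nat} (U : 'M[C]_n) : Prop :=
  forall i j : 'I_n, (j < i)%N -> U i j = 0.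

Definition Pi {C : numClosedFieldType} {n nc : nat} (A : 'M[C]_n) (P R : 'M[C]_(n, nc)) : 'M[C]_n :=
  P *m invmx (ctr R *m A *m P) *m ctr R *m A.

From HB Require Import structures.
From mathcomp Require Import all_boot all_order all_algebra.
From mathcomp Require Import complex reals.
Import Order.TTheory GRing.Theory Num.Theory.
Local Open Scope ring_scope.

(* In the basis Vr, Pi(P#, R#) is the coordinate projection E = diag(I, 0):
   Pi depends on P# and R# only through their ranges, and since Vl^* A Vr is
   diagonal, the leading columns of Vr and Vl give Pi = Vr E Vr^-1.  So Pi is
   N-orthogonal iff E is G-orthogonal for G = Vr^* N Vr, i.e. iff G commutes
   with E, i.e. iff G is block diagonal.  A Hermitian positive definite block
   diagonal G equals D^* D for D = diag(Ucc, Uff) built from the Cholesky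
   factors of its diagonal blocks, and every such D^* D is block diagonal. *)

Section Matrices.
Set Implicit Arguments. Unset Strict Implicit.
Variable C : numClosedFieldType.

Lemma ctr_mul m n p (A : 'M[C]_(m, n)) (B : 'M[C]_(n, p)) :
  ctr (A *m B) = ctr B *m ctr A.
Proof. by rewrite /ctr map_mxM trmx_mul. Qed.

Lemma ctrK m n (A : 'M[C]_(m, n)) : ctr (ctr A) = A.
Proof. by apply/matrixP=> i j; rewrite /ctr !mxE conjCK. Qed.

Lemma ctr0 m n : ctr (0 : 'M[C]_(m, n)) = 0.
Proof. by rewrite /ctr map_mx0 trmx0. Qed.

Lemma ctr_scalar n (a : C) : ctr (a%:M : 'M_n) = a^*%:M.
Proof. by rewrite /ctr map_scalar_mx tr_scalar_mx. Qed.

Lemma ctr1 n : ctr (1%:M : 'M[C]_n) = 1%:M.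
Proof. by rewrite ctr_scalar conjC1. Qed.

Lemma ctrZ m n (a : C) (A : 'M[C]_(m, n)) : ctr (a *: A) = a^* *: ctr A.
Proof. by apply/matrixP=> i j; rewrite /ctr !mxE rmorphM. Qed.

Lemma ctrB m n (A B : 'M[C]_(m, n)) : ctr (A - B) = ctr A - ctr B.
Proof. by apply/matrixP=> i j; rewrite /ctr !mxE rmorphB. Qed.

Lemma ctr_block m1 m2 n1 n2 (Aul : 'M[C]_(m1, n1)) (Aur : 'M[C]_(m1, n2))
    (Adl : 'M[C]_(m2, n1)) (Adr : 'M[C]_(m2, n2)) :
  ctr (block_mx Aul Aur Adl Adr) = block_mx (ctr Aul) (ctr Adl) (ctr Aur) (ctr Adr).
Proof. by rewrite /ctr map_block_mx tr_block_mx. Qed.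

Lemma ctr_col m1 m2 n (A : 'M[C]_(m1, n)) (B : 'M[C]_(m2, n)) :
  ctr (col_mx A B) = row_mx (ctr A) (ctr B).
Proof. by rewrite /ctr map_col_mx tr_col_mx. Qed.

Lemma ctr_lsubmx m n1 n2 (A : 'M[C]_(m, n1 + n2)) : ctr (lsubmx A) = usubmx (ctr A).
Proof. by rewrite /ctr map_lsubmx trmx_lsub. Qed.

Lemma unitmx_ctr n (A : 'M[C]_n) : (ctr A \in unitmx) = (A \in unitmx).
Proof. by rewrite /ctr unitmx_tr map_unitmx. Qed.

Lemma ctr_invmx n (A : 'M[C]_n) : ctr (invmx A) = invmx (ctr A).
Proof. by rewrite /ctr map_invmx trmx_inv. Qed.

Lemma ctr_delta n (i : 'I_n) : ctr (delta_mx i 0 : 'cV[C]_n) = delta_mx 0 i.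
Proof. by apply/matrixP=> a b; rewrite /ctr !mxE rmorph_nat andbC. Qed.

Lemma invmxM n (X Y : 'M[C]_n) : X \in unitmx -> Y \in unitmx ->
  invmx (X *m Y) = invmx Y *m invmx X.
Proof.
move=> Xu Yu; have XYK : X *m Y *m (invmx Y *m invmx X) = 1%:M.
  by rewrite mulmxA mulmxK // mulmxV.
by rewrite -[invmx (X *m Y)]mulmx1 -XYK mulmxA mulVmx ?unitmx_mul ?Xu // mul1mx.
Qed.

Lemma mx_congruence_eq n (V X Y : 'M[C]_n) : V \in unitmx ->
  ctr V *m X *m V = ctr V *m Y *m V <-> X = Y.
Proof.
move=> Vu; have cVu : ctr V \in unitmx by rewrite unitmx_ctr.
by split=> [/(can_inj (mulmxK Vu))/(can_inj (mulKmx cVu))|->].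
Qed.

Lemma mx_congruence_invmx n (V N K : 'M[C]_n) : V \in unitmx ->
  N = ctr (invmx V) *m K *m invmx V <-> ctr V *m N *m V = K.
Proof.
move=> Vu; rewrite -(mx_congruence_eq _ _ Vu) !mulmxA -ctr_mul mulVmx // ctr1 mul1mx.
by rewrite mulmxKV.
Qed.

Lemma eq_colspace_mulmx_unit m n (P Q : 'M[C]_(m, n)) :
  (P^T :=: Q^T)%MS -> exists2 X, X \in unitmx & P = Q *m X.
Proof.
move=> ePQ; have /eqmxMunitP[X Xu PX] : (P^T == Q^T)%MS by apply/eqmxP.
by exists X^T; rewrite ?unitmx_tr // -[P]trmxK PX trmx_mul trmxK.
Qed.

Lemma upper_triangular_block n1 n2 (Aul : 'M[C]_n1) (Aur : 'M[C]_(n1, n2))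
    (Adr : 'M[C]_n2) :
  upper_triangular Aul -> upper_triangular Adr ->
  upper_triangular (block_mx Aul Aur 0 Adr).
Proof.
move=> ulT drT i j; rewrite -(splitK i) -(splitK j).
case: (split i) => i'; case: (split j) => j' /=.
- by rewrite block_mxEul => /ulT.
- by rewrite ltnNge (leq_trans (ltnW (ltn_ord i'))) ?leq_addr.
- by rewrite block_mxEdl mxE.
- by rewrite block_mxEdr ltn_add2l => /drT.
Qed.

End Matrices.

Section PositiveDefinite.
Set Implicit Arguments. Unset Strict Implicit.
Variable C : numClosedFieldType.

Lemma ctr_submx_herm m1 m2 (G : 'M[C]_(m1 + m2)) : ctr G = G ->
  [/\ ctr (ulsubmx G) = ulsubmx G, ctr (drsubmx G) = drsubmx G,
      ctr (ursubmx G) = dlsubmx G & ctr (dlsubmx G) = ursubmx G].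
Proof. by rewrite -{1 2}[G]submxK ctr_block => /eq_block_mx[-> -> -> ->]. Qed.

Lemma hpd_congruence m n (X : 'M[C]_(m, n)) (G : 'M[C]_m) :
  (forall x : 'cV_n, X *m x = 0 -> x = 0) -> hpd G -> hpd (ctr X *m G *m X).
Proof.
move=> Xinj [hG pG]; split; first by rewrite !ctr_mul ctrK hG mulmxA.
move=> x x0; have Xx0 : X *m x != 0 by apply: contraNneq x0 => /Xinj->.
by have := pG _ Xx0; rewrite ctr_mul !mulmxA.
Qed.

Lemma hpd_congruence_unit n (V G : 'M[C]_n) :
  V \in unitmx -> hpd G -> hpd (ctr V *m G *m V).
Proof.
move=> Vu; apply: hpd_congruence => x /(congr1 (mulmx (invmx V))).
by rewrite mulKmx // mulmx0.
Qed.

Lemma hpd_ulsubmx m1 m2 (G : 'M[C]_(m1 + m2)) : hpd G -> hpd (ulsubmx G).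
Proof.
have -> : ulsubmx G = ctr (col_mx 1%:M 0) *m G *m col_mx 1%:M 0.
  rewrite ctr_col ctr1 ctr0 -{2}[G]submxK mul_row_block mul_row_col.
  by rewrite !mul1mx !mul0mx !addr0 mulmx1 mulmx0 addr0.
by apply: hpd_congruence => x /(congr1 usubmx); rewrite mul_col_mx col_mxKu mul1mx linear0.
Qed.

Lemma hpd_drsubmx m1 m2 (G : 'M[C]_(m1 + m2)) : hpd G -> hpd (drsubmx G).
Proof.
have -> : drsubmx G = ctr (col_mx 0 1%:M) *m G *m col_mx 0 1%:M.
  rewrite ctr_col ctr1 ctr0 -{2}[G]submxK mul_row_block mul_row_col.
  by rewrite !mul1mx !mul0mx !add0r mulmx1 mulmx0 add0r.
by apply: hpd_congruence => x /(congr1 dsubmx); rewrite mul_col_mx col_mxKd mul1mx linear0.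
Qed.

Lemma hpd_unitmx n (G : 'M[C]_n) : hpd G -> G \in unitmx.
Proof.
move=> [_ pG]; rewrite unitmxE unitfE -det_tr; apply/negP => /det0P[v v0 vG0].
have := pG v^T; rewrite trmx_eq0 => /(_ v0).
by rewrite -mulmxA -[G *m v^T]trmxK trmx_mul trmxK vG0 trmx0 mulmx0 mxE ltxx.
Qed.

Lemma hpd_schur m1 m2 (G : 'M[C]_(m1 + m2)) : hpd G ->
  hpd (drsubmx G - dlsubmx G *m invmx (ulsubmx G) *m ursubmx G).
Proof.
move=> hG; have G11u := hpd_unitmx (hpd_ulsubmx hG).
have [hermG pG] := hG; have [h11 h22 h12 h21] := ctr_submx_herm hermG.
split; first by rewrite ctrB !ctr_mul ctr_invmx h11 h22 h12 h21 mulmxA.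
(* G y = [0; S x] for the Schur complement S, hence y^* G y = x^* S x. *)
move=> x x0; pose y := col_mx (- (invmx (ulsubmx G) *m ursubmx G *m x)) x.
have y0 : y != 0.
  by apply: contraNneq x0 => /(congr1 dsubmx); rewrite col_mxKd => ->; rewrite linear0.
have := pG y y0; rewrite -mulmxA -{1}[G]submxK /y mul_block_col.
rewrite !mulmxN -!mulmxA mulKVmx // addNr ctr_col mul_row_col mulmx0 add0r.
by rewrite mulmxBl addrC !mulmxA.
Qed.

Lemma cholesky n (G : 'M[C]_n) : hpd G ->
  exists U, [/\ upper_triangular U, U \in unitmx & G = ctr U *m U].
Proof.
elim: n G => [|k IH] G hG.
  by exists 1%:M; split; [case | rewrite unitmx1 | apply/matrixP => -[]].
move: G hG; rewrite -[k.+1]/(1 + k)%N => G hG.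
have [U' [U'tri U'u eS]] := IH _ (hpd_schur hG).
pose a := ulsubmx G 0 0; have Ga : ulsubmx G = a%:M := mx11_scalar _.
have a_gt0 : 0 < a.
  by have := (hpd_ulsubmx hG).2 1%:M (oner_neq0 _); rewrite ctr1 mul1mx mulmx1.
pose s := sqrtC a.
have s_gt0 : 0 < s by rewrite sqrtC_gt0.
have s_neq0 : s != 0 by rewrite gt_eqF.
have s_real : s^* = s by rewrite geC0_conj // ltW.
have sV_real : s^-1^* = s^-1 by rewrite geC0_conj // invr_ge0 ltW.
have ss : s * s = a by rewrite -expr2 sqrtCK.
have [_ _ hur _] := ctr_submx_herm hG.1.
(* [a b; b^* G22] = U^* U for U = [s b/s; 0 U'], as U'^* U' = G22 - b^* b / a. *)
exists (block_mx s%:M (s^-1 *: ursubmx G) 0 U'); split.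
- by apply: upper_triangular_block => // i j; rewrite !ord1.
- by rewrite unitmxE det_ublock det_scalar1 unitrM unitfE s_neq0 -unitmxE.
rewrite ctr_block ctr_scalar ctr0 ctrZ mulmx_block !mul0mx !addr0 -{1}[G]submxK.
rewrite s_real sV_real; congr block_mx.
- by rewrite -scalar_mxM ss.
- by rewrite mul_scalar_mx scalerA mulfV // scale1r.
- by rewrite mulmx0 addr0 hur mul_mx_scalar scalerA mulfV // scale1r.
- by rewrite hur -eS Ga invmx_scalar -scalemxAl -scalemxAr scalerA -invfM ss
    mul_mx_scalar -scalemxAl addrC subrK.
Qed.

Lemma gram_block_diag m1 m2 (U1 : 'M[C]_m1) (U2 : 'M[C]_m2) :
  ctr (block_mx U1 0 0 U2) *m block_mx U1 0 0 U2 =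
  block_mx (ctr U1 *m U1) 0 0 (ctr U2 *m U2).
Proof. by rewrite ctr_block !ctr0 mulmx_block !mulmx0 !mul0mx !addr0 add0r. Qed.

Lemma hpd_block_diag_cholesky m1 m2 (G : 'M[C]_(m1 + m2)) : hpd G ->
  ursubmx G = 0 /\ dlsubmx G = 0 <->
  exists (U1 : 'M[C]_m1) (U2 : 'M[C]_m2),
    [/\ upper_triangular U1, upper_triangular U2, block_mx U1 0 0 U2 \in unitmx &
        G = ctr (block_mx U1 0 0 U2) *m block_mx U1 0 0 U2].
Proof.
move=> hG; split=> [[G12 G21] | [U1 [U2 [_ _ _ ->]]]]; last first.
  by rewrite gram_block_diag block_mxKur block_mxKdl.
have [U1 [U1tri U1u G11E]] := cholesky (hpd_ulsubmx hG).
have [U2 [U2tri U2u G22E]] := cholesky (hpd_drsubmx hG).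
exists U1, U2; split=> //; first by rewrite unitmxE det_ublock unitrM -!unitmxE U1u.
by rewrite gram_block_diag -G11E -G22E -G12 -G21 submxK.
Qed.

End PositiveDefinite.

Section Projection.
Set Implicit Arguments. Unset Strict Implicit.
Variable C : numClosedFieldType.

Lemma ipN_delta n (K : 'M[C]_n) (i j : 'I_n) :
  ipN K (delta_mx j 0) (delta_mx i 0) = K i j.
Proof. by rewrite /ipN ctr_delta -rowE -colE !mxE. Qed.

Lemma N_orthogonalP n (N Z : 'M[C]_n) : N_orthogonal N Z <-> N *m Z = ctr Z *m N.
Proof.
split=> [orthNZ | NZ x y].
  apply/matrixP=> i j; rewrite -!ipN_delta.
  by have := orthNZ (delta_mx j 0) (delta_mx i 0); rewrite /ipN ctr_mul !mulmxA.
by rewrite /ipN ctr_mul !mulmxA -(mulmxA _ N) NZ !mulmxA.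
Qed.

Lemma N_orthogonal_conj n (N Z V : 'M[C]_n) : V \in unitmx ->
  N_orthogonal N (V *m Z *m invmx V) <-> N_orthogonal (ctr V *m N *m V) Z.
Proof.
move=> Vu; have cVu : ctr V \in unitmx by rewrite unitmx_ctr.
rewrite !N_orthogonalP -(mx_congruence_eq _ _ Vu) !ctr_mul ctr_invmx.
by rewrite !mulmxA mulmxKV // mulmxV // mul1mx.
Qed.

Lemma N_orthogonal_pid m1 m2 (G : 'M[C]_(m1 + m2)) :
  N_orthogonal G (block_mx 1%:M 0 0 0) <-> ursubmx G = 0 /\ dlsubmx G = 0.
Proof.
rewrite N_orthogonalP ctr_block ctr1 !ctr0 -[G]submxK !mulmx_block.
rewrite !mulmx1 !mul1mx !mulmx0 !mul0mx !addr0 !block_mxKur !block_mxKdl.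
by split=> [/eq_block_mx[_ <- -> _] | [-> ->]].
Qed.

Lemma Pi_mulmx_unit n k (A : 'M[C]_n) (P R : 'M[C]_(n, k)) (X Y : 'M[C]_k) :
  X \in unitmx -> Y \in unitmx -> ctr R *m A *m P \in unitmx ->
  Pi A (P *m X) (R *m Y) = Pi A P R.
Proof.
move=> Xu Yu Du; have cYu : ctr Y \in unitmx by rewrite unitmx_ctr.
rewrite /Pi; have -> : ctr (R *m Y) *m A *m (P *m X) = ctr Y *m (ctr R *m A *m P) *m X.
  by rewrite ctr_mul !mulmxA.
by rewrite !invmxM ?unitmx_mul ?cYu ?Du // ctr_mul !mulmxA mulmxKV // mulmxK.
Qed.

Lemma Pi_lsubmx n1 n2 (A Vr Vl : 'M[C]_(n1 + n2)) :
  A \in unitmx -> Vr \in unitmx -> Vl \in unitmx -> is_diag_mx (ctr Vl *m A *m Vr) ->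
  ctr (lsubmx Vl) *m A *m lsubmx Vr \in unitmx /\
  Pi A (lsubmx Vr) (lsubmx Vl) = Vr *m block_mx 1%:M 0 0 0 *m invmx Vr.
Proof.
move=> Au Vru Vlu; set D := ctr Vl *m A *m Vr.
rewrite -[D]submxK is_diag_block_mx // => /and4P[/eqP D12 _ _ _].
have Du : D \in unitmx by rewrite !unitmx_mul unitmx_ctr Vlu Au.
have uD : ctr (lsubmx Vl) *m A *m Vr = row_mx (ulsubmx D) 0.
  by rewrite -D12 /ulsubmx /ursubmx hsubmxK ctr_lsubmx !mul_usub_mx.
have D11E : ulsubmx D = ctr (lsubmx Vl) *m A *m lsubmx Vr.
  by rewrite mulmx_lsub uD row_mxKl.
have D11u : ulsubmx D \in unitmx.
  by move: Du; rewrite -{1}[D]submxK D12 !unitmxE det_lblock unitrM => /andP[].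
rewrite -D11E; split=> //.
rewrite /Pi -D11E -mulmxA -(mulmxK Vru (_ *m A)) uD mulmxA -(mulmxA (lsubmx Vr)).
rewrite mul_mx_row mulVmx // mulmx0 -{3}[Vr]hsubmxK mul_row_block.
by rewrite mul_mx_row !mulmx0 mulmx1 addr0 add0r.
Qed.

Lemma Pi_biorthogonal n1 n2 (A Vr Vl : 'M[C]_(n1 + n2)) (P R : 'M[C]_(n1 + n2, n1)) :
  A \in unitmx -> Vr \in unitmx -> Vl \in unitmx -> is_diag_mx (ctr Vl *m A *m Vr) ->
  (P^T :=: (lsubmx Vr)^T)%MS -> (R^T :=: (lsubmx Vl)^T)%MS ->
  Pi A P R = Vr *m block_mx 1%:M 0 0 0 *m invmx Vr.
Proof.
move=> Au Vru Vlu biorth /eq_colspace_mulmx_unit[X Xu ->].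
move=> /eq_colspace_mulmx_unit[Y Yu ->].
by have [D11u <-] := Pi_lsubmx Au Vru Vlu biorth; apply: Pi_mulmx_unit.
Qed.

End Projection.

Theorem theorem3p1 (R : realType) (nc nf : nat) (hnc : (0 < nc)%N)
  (A M Vr Vl : 'M[R[i]]_(nc + nf)) (lam : 'rV[R[i]]_(nc + nf))
  (Psh Rsh : 'M[R[i]]_(nc + nf, nc)) (N : 'M[R[i]]_(nc + nf)) :
  A \in unitmx -> M \in unitmx ->
  diagonalizable (invmx M *m A) ->
  diagonalizable (invmx (ctr M) *m ctr A) ->
  Vr \in unitmx -> Vl \in unitmx ->
  A *m Vr = M *m Vr *m diag_mx lam ->
  ctr Vl *m A = diag_mx lam *m ctr Vl *m M ->
  is_diag_mx (ctr Vl *m A *m Vr) ->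
  is_diag_mx (ctr Vl *m M *m Vr) ->
  (forall i j : 'I_(nc + nf), (i <= j)%N -> `|1 - lam 0 j| <= `|1 - lam 0 i|) ->
  ((Psh^T) :=: (lsubmx Vr)^T)%MS ->
  ((Rsh^T) :=: (lsubmx Vl)^T)%MS ->
  hpd N ->
  N_orthogonal N (Pi A Psh Rsh) <->
  exists (Ucc : 'M[R[i]]_nc) (Uff : 'M[R[i]]_nf),
    [/\ upper_triangular Ucc, upper_triangular Uff,
        block_mx Ucc 0 0 Uff \in unitmx &
        N = ctr (invmx Vr) *m ctr (block_mx Ucc 0 0 Uff)
              *m block_mx Ucc 0 0 Uff *m invmx Vr].
Proof.
move=> Au _ _ _ Vru Vlu _ _ biorth _ _ ePsh eRsh hN.
rewrite (Pi_biorthogonal Au Vru Vlu biorth ePsh eRsh) N_orthogonal_conj //.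
rewrite N_orthogonal_pid (hpd_block_diag_cholesky (hpd_congruence_unit Vru hN)).
split=> -[Ucc [Uff [Ucc_tri Uff_tri Du NE]]]; exists Ucc, Uff; split=> //.
  by rewrite -(mulmxA _ (ctr _)); apply/(mx_congruence_invmx _ _ Vru).
by move: NE; rewrite -(mulmxA _ (ctr _)) => /(mx_congruence_invmx _ _ Vru).
Qed.
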